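(* The class of chain graphs is degree sandwich monotone; that is, for every chain graph $G$ and every set $F\subseteq E(G)$ such that $G-F$ is a chain graph, every degree-minimal edge $e$ in $F$ satisfies that $G-e$ is a chain graph.
   Context: A chain graph is a bipartite graph whose vertex set can be partitioned into two independent sets $X,Y$ such that the neighborhoods of the vertices of $X$ are linearly ordered by inclusion. Given a graph $G$ and $F\subseteq E(G)$, an edge $e\in F$ is degree-minimal in $F$ if its endpoints can be named $u,v$ so that (i) $u$ has the smallest degree in $G$ among all vertices incident to an edge of $F$, and (ii) $v$ has the smallest degree in $G$ among all vertices $w$ with $uw\in F$. *)

(* A finite simple graph is a symmetric irreflexive relation
   g on a finite vertex type T. Edges are 2-element vertex sets {u,v}. *)
From mathcomp Require Import all_boot all_order.
Set Implicit Arguments. Unset Strict Implicit. Unset Printing Implicit Defensive.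

Section Graphs.
Variable T : finType.

Definition nbhd (g : rel T) (x : T) : {set T} := [set y | g x y].
Definition deg (g : rel T) (x : T) : nat := #|nbhd g x|.

Definition edges (g : rel T) : {set {set T}} :=
  [set [set x; y] | x in T, y in T & g x y].

Definition del_edges (g : rel T) (F : {set {set T}}) : rel T :=
  fun x y => g x y && ([set x; y] \notin F).

Definition del_edge (g : rel T) (f : {set T}) : rel T := del_edges g [set f].

Definition chain_graph (g : rel T) : Prop :=
  exists X : {set T},
    [/\ (forall x y, x \in X -> y \in X -> ~~ g x y),
        (forall x y, x \notin X -> y \notin X -> ~~ g x y) &
        (forall x x', x \in X -> x' \in X ->
           (nbhd g x \subset nbhd g x') \/ (nbhd g x' \subset nbhd g x))].

Definition degree_minimal (g : rel T) (F : {set {set T}}) (f : {set T}) : Prop :=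
  f \in F /\
  exists u v, [/\ f = [set u; v],
    (forall w z, [set w; z] \in F -> deg g u <= deg g w) &
    (forall w, [set u; w] \in F -> deg g v <= deg g w)].

End Graphs.

(* Fix a chain bipartition X of G; it remains a bipartition of G - e with both
   sides independent, so G - e fails to be a chain graph on X only if two
   vertices x, x' of X have crossing neighbourhoods b in N(x) \ N(x') and
   d in N(x') \ N(x). Since G has no crossing, e is xd or x'b, say xd, and then
   b - x - d - x' is an induced P4 of G with middle edge e. In a chain graph
   the endpoints of an induced P4 have strictly smaller neighbourhoods than the
   opposite interior vertices, so by degree-minimality of e neither end edge
   of the P4 lies in F. Those two edges then form an induced 2K2 in G - F,
   which no chain graph contains. *)
From mathcomp Require Import all_boot all_order.
Set Implicit Arguments. Unset Strict Implicit. Unset Printing Implicit Defensive.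

Section ChainGraphs.
Variable T : finType.
Implicit Types (h g : rel T) (X : {set T}) (F : {set {set T}}).

Definition chain_partition h X : Prop :=
  [/\ (forall x y, x \in X -> y \in X -> ~~ h x y),
      (forall x y, x \notin X -> y \notin X -> ~~ h x y) &
      (forall x x', x \in X -> x' \in X ->
         (nbhd h x \subset nbhd h x') \/ (nbhd h x' \subset nbhd h x))].

(* [b] and [d] witness that [nbhd h x] and [nbhd h x'] are incomparable. *)
Definition crossing h x b x' d := [&& h x b, h x' d, ~~ h x d & ~~ h x' b].

Definition induced_2K2 h a b c d := [&& crossing h a b c d, ~~ h a c & ~~ h b d].

Definition induced_P4 h p q r s :=
  [&& h p q, h q r & h r s] && [&& ~~ h p r, ~~ h q s & ~~ h p s].

Lemma crossing_sym h : symmetric h ->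
  forall x b x' d, crossing h x b x' d = crossing h b x d x'.
Proof.
by move=> hsym x b x' d; rewrite /crossing !(hsym b) !(hsym d) (andbC (~~ h x' b)).
Qed.

Lemma nbhd_nested_iff_no_crossing h x x' :
  (nbhd h x \subset nbhd h x' \/ nbhd h x' \subset nbhd h x) <->
  (forall b d, ~~ crossing h x b x' d).
Proof.
split.
  move=> nested b d; apply/and4P => -[hxb hx'd nxd nx'b].
  case: nested => /subsetP sub.
    by move: (sub b); rewrite !inE hxb (negbTE nx'b) => /(_ isT).
  by move: (sub d); rewrite !inE hx'd (negbTE nxd) => /(_ isT).
move=> nocross.
case: (boolP (nbhd h x \subset nbhd h x')) => [|/subsetPn [b]]; first by left.
rewrite !inE => hxb nx'b; right; apply/subsetP => d; rewrite !inE => hx'd.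
by apply: contraR (nocross b d) => nxd; apply/and4P.
Qed.

Lemma del_edges_sub g F x y : del_edges g F x y -> g x y.
Proof. by case/andP. Qed.

Lemma del_edges_sym g F : symmetric g -> symmetric (del_edges g F).
Proof. by move=> gsym x y; rewrite /del_edges gsym setUC. Qed.

Lemma del_edge_removed g f x y : g x y -> ~~ del_edge g f x y -> f = [set x; y].
Proof. by move=> gxy; rewrite /del_edge /del_edges gxy inE negbK => /eqP. Qed.

Section ChainPartition.
Variables (h : rel T) (X : {set T}).
Hypotheses (hsym : symmetric h) (hX : chain_partition h X).

Lemma chain_edge_sides x y : h x y -> (x \in X) = (y \notin X).
Proof.
case: hX => indX indXc _ hxy.
case: (boolP (x \in X)) => xX; case: (boolP (y \in X)) => yX //.
  by move: (indX x y xX yX); rewrite hxy.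
by move: (indXc x y xX yX); rewrite hxy.
Qed.

Lemma chain_nested_same_side x x' : (x \in X) = (x' \in X) ->
  nbhd h x \subset nbhd h x' \/ nbhd h x' \subset nbhd h x.
Proof.
case: hX => _ _ nestX; case: (boolP (x \in X)) => xX x'X; first exact: nestX.
apply/nbhd_nested_iff_no_crossing => b d; apply/negP => cr.
have /and4P [hxb hx'd _ _] := cr.
have bX : b \in X by rewrite -[b \in X]negbK -(chain_edge_sides hxb).
have dX : d \in X by rewrite -[d \in X]negbK -(chain_edge_sides hx'd) -x'X.
move: cr; rewrite (crossing_sym hsym); apply/negP.
exact: (nbhd_nested_iff_no_crossing h b d).1 (nestX b d bX dX) x x'.
Qed.

Lemma chain_no_crossing x b x' d : (x \in X) = (x' \in X) -> ~~ crossing h x b x' d.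
Proof.
move=> same; apply: (nbhd_nested_iff_no_crossing h x x').1.
exact: chain_nested_same_side.
Qed.

End ChainPartition.

Section ChainGraph.
Variable h : rel T.
Hypotheses (hsym : symmetric h) (chH : chain_graph h).

Lemma chain_graph_2K2_free a b c d : ~~ induced_2K2 h a b c d.
Proof.
case: chH => X hX; apply/and3P => -[cr nac nbd].
have /and4P [hab hcd nad ncb] := cr.
case: (boolP ((a \in X) == (c \in X))) => [/eqP|] same.
  by move: cr; apply/negP/(chain_no_crossing hsym hX).
have same' : (a \in X) = (d \in X).
  by move: same; rewrite (chain_edge_sides hX hcd); case: (a \in X); case: (d \in X).
have := chain_no_crossing hsym hX b c same'.
by rewrite /crossing hab (hsym d) hcd nac (hsym d) nbd.
Qed.

Lemma chain_P4_nbhd_proper p q r s : induced_P4 h p q r s -> nbhd h p \proper nbhd h r.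
Proof.
case: chH => X hX /andP [/and3P [hpq hqr hrs] /and3P [npr nqs nps]].
have same : (r \in X) = (p \in X).
  by rewrite (chain_edge_sides hX hpq) (chain_edge_sides hX hqr) negbK.
apply/properP; split; last by exists s; rewrite !inE.
case: (chain_nested_same_side hsym hX same) => // /subsetP sub.
by move: (sub s); rewrite !inE hrs (negbTE nps) => /(_ isT).
Qed.

Lemma chain_P4_deg_lt p q r s : induced_P4 h p q r s -> deg h p < deg h r.
Proof. by move/chain_P4_nbhd_proper/proper_card. Qed.

Lemma induced_P4_rev p q r s : induced_P4 h p q r s = induced_P4 h s r q p.
Proof.
rewrite /induced_P4 (hsym s r) (hsym r q) (hsym q p) (hsym s q) (hsym r p) (hsym s p).
by case: (h p q); case: (h q r); case: (h r s); case: (h p r); case: (h q s).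
Qed.

End ChainGraph.

Lemma degree_minimal_deg_le g F a d b :
  degree_minimal g F [set a; d] -> [set a; b] \in F -> deg g d <= deg g b.
Proof.
case=> _ [u [v [fE minu minv]]] abF.
have le_ub : deg g u <= deg g b by apply: (minu b a); rewrite setUC.
have : d \in [set u; v] by rewrite -fE !inE eqxx orbT.
rewrite !inE => /orP [/eqP -> // | /eqP dv].
have : u \in [set a; d] by rewrite fE !inE eqxx.
rewrite !inE => /orP [/eqP ua | /eqP ud]; last by rewrite -ud.
by rewrite dv; apply: minv; rewrite ua.
Qed.

Section DegreeMinimal.
Variables (g : rel T) (F : {set {set T}}) (f : {set T}).
Hypotheses (gsym : symmetric g) (chG : chain_graph g)
  (chGF : chain_graph (del_edges g F)) (dm : degree_minimal g F f).

Lemma degree_minimal_not_P4_middle p q r s :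
  f = [set q; r] -> ~~ induced_P4 g p q r s.
Proof.
move=> fE; apply/negP => P4.
have lt_pr := chain_P4_deg_lt gsym chG P4.
move: (P4); rewrite (induced_P4_rev gsym) => /(chain_P4_deg_lt gsym chG) lt_sq.
have dm_qr : degree_minimal g F [set q; r] by rewrite -fE.
have dm_rq : degree_minimal g F [set r; q] by rewrite setUC -fE.
have qpF : [set q; p] \notin F.
  by apply/negP => /(degree_minimal_deg_le dm_qr); rewrite leqNgt lt_pr.
have rsF : [set r; s] \notin F.
  by apply/negP => /(degree_minimal_deg_le dm_rq); rewrite leqNgt lt_sq.
case/andP: P4 => /and3P [gpq gqr grs] /and3P [npr nqs nps].
case: dm => fF _.
have := chain_graph_2K2_free (del_edges_sym F gsym) chGF q p r s.
rewrite /induced_2K2 /crossing /del_edges (gsym q) gpq qpF grs rsF (negbTE nqs).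
by rewrite (gsym r) (negbTE npr) (negbTE nps) gqr -fE fF.
Qed.

Lemma del_edge_no_crossing X x b x' d :
  chain_partition g X -> x \in X -> x' \in X -> ~~ crossing (del_edge g f) x b x' d.
Proof.
move=> gX xX x'X; apply/negP => cr; case: (gX) => indX indXc _.
have /and4P [hxb hx'd nxd nx'b] := cr.
have [gxb gx'd] := (del_edges_sub hxb, del_edges_sub hx'd).
have bX : b \notin X by rewrite -(chain_edge_sides gX gxb).
have dX : d \notin X by rewrite -(chain_edge_sides gX gx'd).
have ngxx' := indX x x' xX x'X; have ngbd := indXc b d bX dX.
case: (boolP (g x d)) => gxd; case: (boolP (g x' b)) => gx'b.
- have : x \in [set x'; b].
    by rewrite -(del_edge_removed gx'b nx'b) (del_edge_removed gxd nxd) !inE eqxx.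
  rewrite !inE => /orP [/eqP xx' | /eqP xb]; last by move: bX; rewrite -xb xX.
  by move: nxd; rewrite xx' hx'd.
- apply/negP: (degree_minimal_not_P4_middle b x' (del_edge_removed gxd nxd)).
  by rewrite /induced_P4 (gsym b x) gxb gxd (gsym d x') gx'd ngbd ngxx' (gsym b x') gx'b.
- apply/negP: (degree_minimal_not_P4_middle d x (del_edge_removed gx'b nx'b)).
  rewrite /induced_P4 (gsym d x') gx'd gx'b (gsym b x) gxb (gsym d b) ngbd.
  by rewrite (gsym x' x) ngxx' (gsym d x) gxd.
- apply/negP: (chain_no_crossing gsym gX b d (etrans xX (esym x'X))).
  by rewrite /crossing gxb gx'd gxd gx'b.
Qed.

End DegreeMinimal.
End ChainGraphs.

Theorem theorem4p9 (T : finType) (g : rel T)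
    (gsym : symmetric g) (girr : irreflexive g)
    (F : {set {set T}}) (f : {set T}) :
  chain_graph g ->
  F \subset edges g ->
  chain_graph (del_edges g F) ->
  degree_minimal g F f ->
  chain_graph (del_edge g f).
Proof.
move=> chG _ chGF dm; have [X gX] := chG; case: (gX) => indX indXc _.
exists X; split=> [x y xX yX | x y xX yX | x x' xX x'X].
- exact: contra (@del_edges_sub _ _ _ x y) (indX x y xX yX).
- exact: contra (@del_edges_sub _ _ _ x y) (indXc x y xX yX).
- apply/nbhd_nested_iff_no_crossing => b d.
  exact: (del_edge_no_crossing gsym chG chGF dm b d gX xX x'X).
Qed.
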